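(* PINT-pos can produce false positives in both tasks: (i) there exist two isomorphic temporal graphs that PINT-pos distinguishes (classifies as non-isomorphic); (ii) there exist a temporal graph and two inherently indistinguishable temporal link prediction problems in it that PINT-pos distinguishes.
   Context: A temporal graph $G(t)$ has a finite node set and a finite chronological list of timed edge-addition events $e_{uv,t'}$ ($t'\le t$), with node and event attributes from a finite set. Two temporal graphs are isomorphic if there is a bijection of their nodes preserving node attributes at all times and mapping events to events with the same times and attributes. A model $f$ assigns embeddings $f(G)_u(t')$; it distinguishes $G_1(t),G_2(t)$ unless some node bijection $\pi$ gives $f(G_1)_u(t')=f(G_2)_{\pi(u)}(t')$ for all $u$ and $t'\le t$; it distinguishes node pairs $(u_1,v_1),(u_2,v_2)$ of $G(t)$ unless $f(G)_{u_1}(t')=f(G)_{u_2}(t')$ and $f(G)_{v_1}(t')=f(G)_{v_2}(t')$ for all $t'\le t$. Two link prediction problems $(u_1,v_1),(u_2,v_2)$ on $G(t)$ are inherently indistinguishable if adding the event $e_{u_1v_1,t}$ to $G$ and adding the event $e_{u_2v_2,t}$ to $G$ yield isomorphic temporal graphs. PINT: base RNN embeddings $h^0_u$ updated injectively at each event from $(h^0_u,h^0_v,\Phi(e_{uv,t}))$, followed by injective neighbor aggregation layers $h^k_u(t)=\mathrm{COMBINE}^k(h^{k-1}_u(t),\mathrm{AGG}^k(\{\!\{(h^{k-1}_v(t),\Phi(e_{uv,t'}))\}\!\}))$, where $\Phi$ injectively encodes event attribute and time. PINT-pos is PINT augmented with positional features: given a fixed labeling of the nodes by $1,\dots,n$,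 each node $u$ receives a feature vector indexed by the node labels whose entries count (temporal) walks from $u$ to each labeled node (e.g. for walks of length one, the row of the current adjacency matrix indexed by $u$), and these features are incorporated injectively into the node embeddings. *)

From mathcomp Require Import all_boot.
Set Implicit Arguments. Unset Strict Implicit. Unset Printing Implicit Defensive.

(* Nodes are 'I_n; the fixed labeling 1..n of the paper is the ordinal order
   0..n-1.  Times are natural numbers.            *)

Record event (n : nat) (B : Type) := Event
  { esrc : 'I_n; edst : 'I_n; etime : nat; eattr : B }.

Record tgraph (A B : Type) (n : nat) := TGraph
  { nattr : 'I_n -> nat -> A;
    events : seq (event n B) }.

Definition tvalid (A B : Type) n (G : tgraph A B n) (t : nat) : bool :=
  sorted leq [seq etime e | e <- events G] &&
  all (fun e => etime e <= t) (events G).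

(* an event e_{uv,t} is an (undirected) interaction between u and v *)
Definition ev_match (B : eqType) n (pi : 'I_n -> 'I_n) (e1 e2 : event n B) : bool :=
  [&& etime e2 == etime e1, eattr e2 == eattr e1 &
      ((esrc e2 == pi (esrc e1)) && (edst e2 == pi (edst e1))) ||
      ((esrc e2 == pi (edst e1)) && (edst e2 == pi (esrc e1)))].

Definition tiso (A B : eqType) n (G1 G2 : tgraph A B n) : Prop :=
  exists pi : 'I_n -> 'I_n,
    [/\ bijective pi,
        (forall u s, nattr G2 (pi u) s = nattr G1 u s) &
        all2 (ev_match pi) (events G1) (events G2)].

Definition add_event (A B : Type) n (G : tgraph A B n) (u v : 'I_n) (t : nat) (b : B) :
  tgraph A B n := TGraph (nattr G) (rcons (events G) (Event u v t b)).

(* An arbitrary instance of PINT-pos with embeddings in E and all maps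
   injective (AGG injective on multisets, i.e. on seqs up to permutation).
   The injective event encoding Phi is absorbed into upd / agg (which receive
   the raw (attribute, time) pair). *)
Record PINTpos (A B : finType) (E : eqType) := MkPINTpos {
  mem0 : E;
  upd : E -> E -> B -> nat -> E;
  upd_inj : forall x y b s x' y' b' s',
      upd x y b s = upd x' y' b' s' -> [/\ x = x', y = y', b = b' & s = s'];
  emb0 : E -> A -> seq nat -> E;
  emb0_inj : forall m a p m' a' p',
      emb0 m a p = emb0 m' a' p' -> [/\ m = m', a = a' & p = p'];
  nlayers : nat;
  comb : nat -> E -> E -> E;
  comb_inj : forall k x y x' y', comb k x y = comb k x' y' -> x = x' /\ y = y';
  agg : nat -> seq (E * (B * nat)) -> E;
  agg_multiset_inj : forall k s1 s2, (agg k s1 == agg k s2) = perm_eq s1 s2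
}.

Section Model.
Variables (A B : finType) (E : eqType) (M : PINTpos A B E) (n : nat).
Implicit Types (G : tgraph A B n).

Definition mem_step (m : 'I_n -> E) (e : event n B) : 'I_n -> E :=
  fun w => if w == esrc e then upd M (m (esrc e)) (m (edst e)) (eattr e) (etime e)
           else if w == edst e then upd M (m (edst e)) (m (esrc e)) (eattr e) (etime e)
           else m w.

Definition memory G (t : nat) : 'I_n -> E :=
  foldl mem_step (fun _ => mem0 M) [seq e <- events G | etime e <= t].

Definition adj G (t : nat) (u w : 'I_n) : nat :=
  count (fun e => (etime e <= t) &&
           (((esrc e == u) && (edst e == w)) || ((esrc e == w) && (edst e == u))))
        (events G).

(* positional feature of u: walk (length one) counts from u to the nodes
   labeled 1..n, i.e. row u of the current adjacency matrix *)
Definition posfeat G (t : nat) (u : 'I_n) : seq nat :=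
  [seq adj G t u w | w <- enum 'I_n].

Definition other (e : event n B) (u : 'I_n) : 'I_n :=
  if esrc e == u then edst e else esrc e.

Definition nbrs G (t : nat) (h : 'I_n -> E) (u : 'I_n) : seq (E * (B * nat)) :=
  [seq (h (other e u), (eattr e, etime e)) |
     e <- events G & (etime e <= t) && ((esrc e == u) || (edst e == u))].

Fixpoint hlayer G (t : nat) (k : nat) : 'I_n -> E :=
  match k with
  | 0 => fun u => emb0 M (memory G t u) (nattr G u t) (posfeat G t u)
  | k'.+1 => fun u => comb M k' (hlayer G t k' u) (agg M k' (nbrs G t (hlayer G t k') u))
  end.

Definition pint_emb G (t : nat) (u : 'I_n) : E := hlayer G t (nlayers M) u.

Definition distinguishes_graphs (G1 G2 : tgraph A B n) (t : nat) : Prop :=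
  ~ exists pi : 'I_n -> 'I_n, bijective pi /\
      forall u t', t' <= t -> pint_emb G1 t' u = pint_emb G2 t' (pi u).

Definition distinguishes_pairs G (t : nat) (u1 v1 u2 v2 : 'I_n) : Prop :=
  ~ (forall t', t' <= t ->
       pint_emb G t' u1 = pint_emb G t' u2 /\ pint_emb G t' v1 = pint_emb G t' v2).

End Model.

From mathcomp Require Import all_boot fingroup perm.

Set Implicit Arguments.
Unset Strict Implicit.
Unset Printing Implicit Defensive.

(* The positional features index the walk counts by the fixed node labels, so
   they are not equivariant under relabelling.  Since every layer of PINT-pos
   is injective, the embedding of a node determines its row of the adjacency
   matrix, column by column in label order.  On four nodes, a single edge 0-1
   and a single edge 0-2 are isomorphic (swap 1 and 2), but node 0 of the
   first graph is adjacent to label 1 while no node of the second is.  In the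
   matching {0-1, 2-3}, the link problems (0,2) and (1,3) are exchanged by the
   automorphism (0 1)(2 3), yet the rows of 0 and 1 differ. *)

Section PositionalFeatures.

Variables (A B : finType) (E : eqType) (M : PINTpos A B E) (n : nat).
Implicit Types (G : tgraph A B n).

Lemma hlayer_eq_posfeat G G' t k u v :
  hlayer M G t k u = hlayer M G' t k v -> posfeat G t u = posfeat G' t v.
Proof.
elim: k => [|k IHk] /=; first by case/emb0_inj.
by case/comb_inj => /IHk.
Qed.

Lemma pint_emb_eq_adj G G' t u v :
  pint_emb M G t u = pint_emb M G' t v -> adj G t u =1 adj G' t v.
Proof.
move/hlayer_eq_posfeat/eq_in_map => eq_rows w.
by apply: eq_rows; rewrite mem_enum.
Qed.

Lemma distinguishes_graphs_adj G1 G2 t u w :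
  (forall v, adj G1 t u w <> adj G2 t v w) -> distinguishes_graphs M G1 G2 t.
Proof.
move=> adj_neq [pi [_ eq_emb]].
exact/(adj_neq (pi u))/pint_emb_eq_adj/eq_emb.
Qed.

Lemma distinguishes_pairs_adj G t u1 v1 u2 v2 w :
  adj G t u1 w <> adj G t u2 w -> distinguishes_pairs M G t u1 v1 u2 v2.
Proof.
by move=> adj_neq eq_emb; apply/adj_neq/pint_emb_eq_adj; case: (eq_emb t).
Qed.

End PositionalFeatures.

Definition static_graph n (edges : seq ('I_n * 'I_n)) : tgraph unit unit n :=
  TGraph (fun _ _ => tt) [seq Event e.1 e.2 0 tt | e <- edges].

Lemma tvalid_static_graph n (edges : seq ('I_n * 'I_n)) t :
  tvalid (static_graph edges) t.
Proof.
rewrite /tvalid /= -map_comp all_map; apply/andP; split; last exact/allP.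
have path_zeros (s : seq ('I_n * 'I_n)) : path leq 0 [seq 0 | _ <- s] by elim: s.
by case: edges => //= e; apply: path_zeros.
Qed.

Lemma bijective_perm (T : finType) (s : {perm T}) : bijective s.
Proof. by exists s^-1%g; [exact: permK | exact: permKV]. Qed.

Local Notation "''v_' k" := (@Ordinal 4 k isT)
  (at level 8, k at level 2, format "''v_' k").

Theorem proposition4 :
  (exists (A B : finType) (n : nat) (G1 G2 : tgraph A B n) (t : nat),
      [/\ tvalid G1 t, tvalid G2 t, tiso G1 G2 &
          forall (E : eqType) (M : PINTpos A B E), distinguishes_graphs M G1 G2 t])
  /\
  (exists (A B : finType) (n : nat) (G : tgraph A B n) (t : nat)
          (u1 v1 u2 v2 : 'I_n) (b : B),
      [/\ tvalid G t,
          tiso (add_event G u1 v1 t b) (add_event G u2 v2 t b) &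
          forall (E : eqType) (M : PINTpos A B E),
            distinguishes_pairs M G t u1 v1 u2 v2]).
Proof.
split.
  exists unit, unit, 4, (static_graph [:: ('v_0, 'v_1)]),
    (static_graph [:: ('v_0, 'v_2)]), 0.
  split; rewrite ?tvalid_static_graph //.
    exists (tperm 'v_1 'v_2); split => //; first exact: bijective_perm.
    by rewrite /ev_match /= /tperm !permE.
  move=> E M; apply: (distinguishes_graphs_adj (u := 'v_0) (w := 'v_1)).
  by case=> [[|[|[|[|]]]] ?].
exists unit, unit, 4, (static_graph [:: ('v_0, 'v_1); ('v_2, 'v_3)]), 0,
  'v_0, 'v_2, 'v_1, 'v_3, tt.
split; first exact: tvalid_static_graph.
  exists (tperm 'v_0 'v_1 * tperm 'v_2 'v_3)%g.
  split => //; first exact: bijective_perm.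
  by rewrite /ev_match /= !permM /tperm !permE.
by move=> E M; apply: (distinguishes_pairs_adj (w := 'v_1)).
Qed.
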